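(* For every $n\ge -1$, the join product $\ast\colon \mathrm{N}(\triangle_+^n)^{\otimes 2}\to\mathrm{N}(\triangle_+^n)$ is a chain map, natural in $[n]$, and it makes $\mathrm{N}(\triangle_+^n)$ a Poincaré duality algebra of formal dimension $n+1$ whose unit is the empty simplex $[-1]\to[n]$.
   Context: Coefficients are in $\mathbb{Z}$. $\mathrm{N}(\triangle_+^n)$ is the right suspension of the normalized chain complex of the standard augmented $n$-simplex: it is the free abelian group with basis the subsets $\{v_0<\dots<v_{k-1}\}\subseteq\{0,\dots,n\}$, $0\le k\le n+1$, written $[v_0,\dots,v_{k-1}]$ and placed in degree $k$ (the empty simplex $\emptyset$ in degree $0$), with the convention $[v_{\pi(0)},\dots,v_{\pi(k-1)}]=(-1)^{\mathrm{sgn}\,\pi}[v_0,\dots,v_{k-1}]$, and differential $\partial[v_0,\dots,v_{k-1}]=\sum_i(-1)^i[v_0,\dots,\widehat{v_i},\dots,v_{k-1}]$ (so $\partial[v]=\emptyset$). The join product sends $[v_0,\dots,v_{p-1}]\otimes[v_p,\dots,v_{m-1}]$ to $[v_0,\dots,v_{m-1}]$ (i.e. $(-1)^{\mathrm{sgn}\,\pi}$ times the ordered generator, $\pi$ the ordering permutation) if all $v_i$ are distinct, and to $0$ otherwise. A Poincaré duality algebra of formal dimension $d$ is a connected graded-commutative algebra $A$, finitely generated in each degree, such that $A_i=0$ for $i>d$, $A_d$ has rank $1$, and the multiplication pairing $A_i\otimes A_{d-i}\to A_d$ is non-degenerate for all $i$. *)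

From mathcomp Require Import all_boot all_order all_algebra.
Set Implicit Arguments. Unset Strict Implicit. Unset Printing Implicit Defensive.
Import Order.TTheory GRing.Theory Num.Theory.
Local Open Scope ring_scope.

(* Vertex set [n] = {0,...,n} is modelled as 'I_m with m = n+1 (so n >= -1
   corresponds to m : nat).  A basis simplex [v_0,...,v_{k-1}] (v_i increasing)
   is a subset S : {set 'I_m}, of degree #|S|.  The empty set is the empty
   simplex, in degree 0. *)

Notation free I := {ffun I -> int}.

Definition basis (I : finType) (i : I) : free I := [ffun j => ((j == i) : nat)%:R].

Definition ext (I J : finType) (f : I -> free J) (x : free I) : free J :=
  \sum_(i : I) f i *~ x i.

Notation Nsimp m := {ffun {set 'I_m} -> int}.

(* Tensor square N (x) N, free on pairs of basis simplices; x (x) y. *)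
Notation Nsimp2 m := {ffun ({set 'I_m} * {set 'I_m}) -> int}.
Definition tens (m : nat) (x y : Nsimp m) : Nsimp2 m := [ffun p => x p.1 * y p.2].

Definition Nhom (m k : nat) (x : Nsimp m) : Prop :=
  forall S : {set 'I_m}, x S != 0 -> #|S| = k.

(* Differential: d[v_0..v_{k-1}] = sum_i (-1)^i [.. ^v_i ..], where i is the
   position of v in the increasing enumeration of S, i.e. #{u in S | u < v}. *)
Definition bnd_basis (m : nat) (S : {set 'I_m}) : Nsimp m :=
  \sum_(v in S) basis (S :\ v) *~ (-1) ^+ #|[set u in S | (u < v)%N]|.
Definition bnd (m : nat) : Nsimp m -> Nsimp m := ext (@bnd_basis m).

Definition bnd2 (m : nat) : Nsimp2 m -> Nsimp2 m :=
  ext (fun p : {set 'I_m} * {set 'I_m} =>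
         tens (bnd (basis p.1)) (basis p.2)
         + tens (basis p.1) (bnd (basis p.2)) *~ (-1) ^+ #|p.1|).

(* Sign of the permutation ordering the concatenation of the increasing lists
   S and T (S, T disjoint): (-1)^(number of inversions) where the inversions
   are the pairs (s,t) in S x T with s > t. *)
Definition join_sign (m : nat) (S T : {set 'I_m}) : int :=
  (-1) ^+ #|[set p in setX S T | (p.2 < p.1)%N]|.

Definition join_basis (m : nat) (S T : {set 'I_m}) : Nsimp m :=
  if [disjoint S & T] then basis (S :|: T) *~ join_sign S T else 0.

Definition join (m : nat) : Nsimp2 m -> Nsimp m :=
  ext (fun p : {set 'I_m} * {set 'I_m} => join_basis p.1 p.2).
Definition jmul (m : nat) (x y : Nsimp m) : Nsimp m := join (tens x y).

Definition junit (m : nat) : Nsimp m := basis (set0 : {set 'I_m}).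

(* Functoriality: an order-preserving map f : [m-1] -> [k-1] sends a simplex
   S to f(S) if f is injective on S (then f preserves the vertex order, so no
   sign) and to 0 (degenerate simplex, normalized chains) otherwise. *)
Definition Nmap (m k : nat) (f : 'I_m -> 'I_k) : Nsimp m -> Nsimp k :=
  ext (fun S : {set 'I_m} =>
         if #|f @: S| == #|S| then basis (f @: S) else 0).
Definition Nmap2 (m k : nat) (f : 'I_m -> 'I_k) : Nsimp2 m -> Nsimp2 k :=
  ext (fun p : {set 'I_m} * {set 'I_m} =>
         tens (Nmap f (basis p.1)) (Nmap f (basis p.2))).

Definition is_PD_algebra (A : zmodType) (homA : nat -> A -> Prop)
    (mul : A -> A -> A) (one : A) (d : nat) : Prop :=
    (* graded abelian group: A = direct sum of the subgroups A_k *)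
      ((forall k, homA k 0 /\ forall a x y, homA k x -> homA k y -> homA k (x *~ a + y))
       /\ (forall x, exists (N : nat) (c : nat -> A),
              (forall k, homA k (c k)) /\ x = \sum_(k < N) c k)
       /\ (forall (N : nat) (c : nat -> A), (forall k, homA k (c k)) ->
              \sum_(k < N) c k = 0 -> forall k, (k < N)%N -> c k = 0)) /\
      (forall x y z, mul (mul x y) z = mul x (mul y z)) /\
      (forall x, mul one x = x /\ mul x one = x) /\
      (forall a x y z, mul (x *~ a + y) z = mul x z *~ a + mul y z
                    /\ mul z (x *~ a + y) = mul z x *~ a + mul z y) /\
      (forall p q x y, homA p x -> homA q y -> homA (p + q)%N (mul x y)) /\
      (forall p q x y, homA p x -> homA q y ->
          mul x y = mul y x *~ (-1) ^+ (p * q)) /\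
      (homA 0%N one /\ (forall x, homA 0%N x -> exists c : int, x = one *~ c)
       /\ (forall c : int, one *~ c = 0 -> c = 0)) /\
      (forall k, exists s : seq A, (forall i : 'I_(size s), homA k s`_i) /\
          forall x, homA k x -> exists c : 'I_(size s) -> int,
             x = \sum_(i < size s) s`_i *~ c i) /\
      (forall i x, (d < i)%N -> homA i x -> x = 0) /\
      (* A_d has rank 1 (here: free of rank one), and the pairing is
         non-degenerate *)
      ((exists g, homA d g /\ forall x, homA d x -> exists! c : int, x = g *~ c)
       /\ forall i, (i <= d)%N ->
          (forall x, homA i x -> x != 0 ->
              exists y, homA (d - i)%N y /\ mul x y != 0)
       /\ (forall y, homA (d - i)%N y -> y != 0 ->
              exists x, homA i x /\ mul x y != 0)).

(* All maps involved are Z-linear, so every identity reduces to basis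
   simplices, whose join is [+-(S :|: T)] for disjoint S, T and 0 otherwise.
   The sign is a product over S x T of pair signs [(-1)^(t < s)], so the
   Leibniz rule, associativity, graded commutativity and naturality become
   identities between such products: deleting a vertex of T costs (-1)^|S| and
   the position signs of that vertex, and when S and T share a vertex w the two
   faces obtained by deleting w cancel. Poincare duality pairs a simplex S with
   its complement: the coefficient of x * (~: S) on the top simplex is
   [+- x S], and the other pairing follows by graded commutativity. *)

From mathcomp Require Import all_boot all_order all_algebra ring zify.
(* Imported after MathComp, so that its notation [free] shadows [vector.free]. *)
Import GRing.Theory.
Set Implicit Arguments. Unset Strict Implicit. Unset Printing Implicit Defensive.
Local Open Scope ring_scope.

Definition zlinear (I J : finType) (F : free I -> free J) : Prop :=
  forall (a : int) x y, F (x *~ a + y) = F x *~ a + F y.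

Section FreeModules.
Variables I J K : finType.
Implicit Types (F : free I -> free J) (x : free I).

Lemma basisE (i j : I) : basis i j = (j == i)%:R.
Proof. by rewrite ffunE. Qed.

Lemma free_decomp x : x = \sum_i basis i *~ x i.
Proof.
apply/ffunP => j; rewrite sum_ffunE (bigD1 j) //= big1 => [|i /negbTE ij].
  by rewrite ffunMzE basisE eqxx addr0 mulrzz mul1r.
by rewrite ffunMzE basisE eq_sym ij mul0rz.
Qed.

Lemma basisZ_id (i : I) c : (basis i *~ c) i = c.
Proof. by rewrite ffunMzE basisE eqxx mulrzz mul1r. Qed.

Lemma free_neq0 x : x != 0 -> exists i, x i != 0.
Proof.
case: (pickP (fun i => x i != 0)) => [i xi | x0]; first by exists i.
by case/eqP; apply/ffunP => i; rewrite ffunE; apply/eqP/negbFE/x0.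
Qed.

Section Zlinear.
Variable F : free I -> free J.
Hypothesis linF : zlinear F.

Lemma zlinear0 : F 0 = 0.
Proof. by have := linF (-1) 0 0; rewrite mul0rz addr0 mulrN1z addNr. Qed.

Lemma zlinearZ a x : F (x *~ a) = F x *~ a.
Proof. by have := linF a x 0; rewrite !addr0 zlinear0 addr0. Qed.

Lemma zlinear_sum (T : finType) (P : pred T) (G : T -> free I) (c : T -> int) :
  F (\sum_(t | P t) G t *~ c t) = \sum_(t | P t) F (G t) *~ c t.
Proof. by elim/big_rec2: _ => [|t y1 y2 _ <-]; rewrite ?zlinear0 ?linF. Qed.

End Zlinear.

Lemma zlinear_basis_eq F G : zlinear F -> zlinear G ->
  (forall i, F (basis i) = G (basis i)) -> F =1 G.
Proof.
move=> linF linG FG x; rewrite (free_decomp x) !zlinear_sum //.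
by apply: eq_bigr => i _; rewrite FG.
Qed.

Lemma zlinear_comp (G : free J -> free K) F :
  zlinear G -> zlinear F -> zlinear (G \o F).
Proof. by move=> linG linF a x y /=; rewrite linF linG. Qed.

Lemma ext_zlinear (f : I -> free J) : zlinear (ext f).
Proof.
move=> a x y; rewrite /ext mulrz_suml -big_split; apply: eq_bigr => i _ /=.
by rewrite ffunE ffunMzE mulrzDr mulrzz mulrzA.
Qed.

Lemma ext_basis (f : I -> free J) i : ext f (basis i) = f i.
Proof.
rewrite /ext (bigD1 i) //= big1 ?addr0 => [|j /negbTE ji]; first by rewrite basisE eqxx.
by rewrite basisE ji mulr0z.
Qed.

End FreeModules.

Section Tensor.
Variable m : nat.
Implicit Types x y : Nsimp m.

Lemma tens_zlinearl y : zlinear (fun x => tens x y).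
Proof.
by move=> a x x'; apply/ffunP => p; rewrite !(ffunE, ffunMzE) mulrDl mulrzAl.
Qed.

Lemma tens_zlinearr x : zlinear (tens x).
Proof.
by move=> a y y'; apply/ffunP => p; rewrite !(ffunE, ffunMzE) mulrDr mulrzAr.
Qed.

Lemma tens0x y : tens 0 y = 0.
Proof. by apply/ffunP => p; rewrite !ffunE mul0r. Qed.

Lemma tensx0 x : tens x 0 = 0.
Proof. by apply/ffunP => p; rewrite !ffunE mulr0. Qed.

Lemma tens_basis (S T : {set 'I_m}) : tens (basis S) (basis T) = basis (S, T).
Proof.
apply/ffunP => -[A B]; rewrite !ffunE /= xpair_eqE.
by case: (A == S); case: (B == T); rewrite ?mulr1 ?mulr0.
Qed.

End Tensor.

Lemma sum_setU_disjoint (V : zmodType) (I : finType) (A B : {set I}) (F : I -> V) :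
  [disjoint A & B] -> \sum_(i in A :|: B) F i = \sum_(i in A) F i + \sum_(i in B) F i.
Proof. by move=> AB; rewrite -bigU //; apply: eq_bigl => i; rewrite inE. Qed.

Lemma prod_setU_disjoint (R : comPzSemiRingType) (I : finType) (A B : {set I})
    (F : I -> R) :
  [disjoint A & B] -> \prod_(i in A :|: B) F i = \prod_(i in A) F i * \prod_(i in B) F i.
Proof. by move=> AB; rewrite -bigU //; apply: eq_bigl => i; rewrite inE. Qed.

Lemma prodr_sq1 (I : finType) (A : {pred I}) (F : I -> int) :
  (forall i, F i * F i = 1) -> (\prod_(i in A) F i) * \prod_(i in A) F i = 1.
Proof. by move=> F2; rewrite -big_split big1 //= => i _; apply: F2. Qed.

Lemma sign_card (I : finType) (A : {set I}) (P : pred I) :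
  (-1) ^+ #|[set i in A | P i]| = \prod_(i in A) (-1) ^+ P i :> int.
Proof.
rewrite prodrXr -sum1_card (eq_bigl (fun i => (i \in A) && P i)) => [|i]; last first.
  by rewrite inE.
by rewrite big_mkcondr; congr (_ ^+ _); apply: eq_bigr => i _; case: (P i).
Qed.

Lemma setUD1l (I : finType) (S T : {set I}) v :
  v \notin T -> (S :|: T) :\ v = (S :\ v) :|: T.
Proof.
by move=> vT; apply/setP => x; rewrite !inE; case: eqVneq => // ->; rewrite (negbTE vT).
Qed.

Lemma setUD1r (I : finType) (S T : {set I}) v :
  v \notin S -> (S :|: T) :\ v = S :|: (T :\ v).
Proof. by move=> vS; rewrite setUC setUD1l // setUC. Qed.

Lemma setD1U_meet (I : finType) (S T : {set I}) w : w \in S -> w \in T ->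
  (S :\ w) :|: T = S :|: (T :\ w).
Proof.
by move=> wS wT; apply/setP => x; rewrite !inE; case: eqVneq => // ->; rewrite wS wT.
Qed.

Lemma disjoint_setD1 (I : finType) (S T : {set I}) w :
  [disjoint S :\ w & T] = [disjoint S & T :\ w].
Proof.
rewrite -!setI_eq0; congr (_ == _).
by apply/setP => x; rewrite !inE; case: eqVneq; rewrite ?andbF.
Qed.

Lemma disjoint_setUl (I : finType) (S T U : {set I}) :
  [disjoint S :|: T & U] = [disjoint S & U] && [disjoint T & U].
Proof. by rewrite -!setI_eq0 setIUl setU_eq0. Qed.

Lemma disjoint_setUr (I : finType) (S T U : {set I}) :
  [disjoint S & T :|: U] = [disjoint S & T] && [disjoint S & U].
Proof. by rewrite -!setI_eq0 setIUr setU_eq0. Qed.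

Lemma mulrz_sign_eq0 (V : zmodType) (v : V) n : (v *~ (-1) ^+ n == 0) = (v == 0).
Proof. by rewrite -signr_odd; case: (odd n); rewrite ?mulrN1z ?oppr_eq0. Qed.

Section Signs.
Variable m : nat.
Implicit Types (S T U : {set 'I_m}) (s t v : 'I_m).

Definition inv_sign s t : int := (-1) ^+ (t < s)%N.

Definition face_sign S v : int := \prod_(u in S) inv_sign v u.

Lemma inv_sign_sq s t : inv_sign s t * inv_sign s t = 1.
Proof. by rewrite -expr2 sqrr_sign. Qed.

Lemma inv_signxx s : inv_sign s s = 1.
Proof. by rewrite /inv_sign ltnn. Qed.

Lemma inv_signC s t : s != t -> inv_sign s t * inv_sign t s = -1.
Proof.
rewrite /inv_sign -signr_addb => st.
by case: ltngtP => // /val_inj ts; rewrite ts eqxx in st.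
Qed.

Lemma prod_inv_signC S v : v \notin S ->
  \prod_(s in S) (inv_sign v s * inv_sign s v) = (-1) ^+ #|S|.
Proof.
move=> vS; rewrite -prodr_const; apply: eq_bigr => s sS; apply: inv_signC.
by apply: contraNneq vS => ->.
Qed.

Lemma face_sign_sq S v : face_sign S v * face_sign S v = 1.
Proof. exact: prodr_sq1 (inv_sign_sq v). Qed.

Lemma face_signU S T v : [disjoint S & T] ->
  face_sign (S :|: T) v = face_sign S v * face_sign T v.
Proof. exact: prod_setU_disjoint. Qed.

Lemma join_signE S T :
  join_sign S T = \prod_(s in S) \prod_(t in T) inv_sign s t.
Proof.
rewrite /join_sign sign_card pair_big /=.
by apply: eq_bigl => -[s t]; rewrite in_setX.
Qed.

Lemma bnd_basisE S : bnd (basis S) = \sum_(v in S) basis (S :\ v) *~ face_sign S v.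
Proof. by rewrite /bnd ext_basis /bnd_basis; under eq_bigr do rewrite sign_card. Qed.

Lemma join_sign_sq S T : join_sign S T * join_sign S T = 1.
Proof. by rewrite join_signE; do 2!apply: prodr_sq1 => ?; exact: inv_sign_sq. Qed.

Lemma join_signD1l S T v : v \in S ->
  join_sign S T = face_sign T v * join_sign (S :\ v) T.
Proof. by move=> vS; rewrite !join_signE (big_setD1 _ vS). Qed.

Lemma join_signD1r S T v : v \in T ->
  join_sign S T = (\prod_(s in S) inv_sign s v) * join_sign S (T :\ v).
Proof.
move=> vT; rewrite !join_signE -big_split; apply: eq_bigr => s _ /=.
by rewrite (big_setD1 _ vT).
Qed.

Lemma join_sign_neq0 S T : join_sign S T != 0.
Proof. by apply/eqP => ST0; have := join_sign_sq S T; rewrite ST0 mul0r. Qed.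

Lemma join_signUl S T U : [disjoint S & T] ->
  join_sign (S :|: T) U = join_sign S U * join_sign T U.
Proof. by move=> ST; rewrite !join_signE prod_setU_disjoint. Qed.

Lemma join_signUr S T U : [disjoint T & U] ->
  join_sign S (T :|: U) = join_sign S T * join_sign S U.
Proof.
move=> TU; rewrite !join_signE -big_split; apply: eq_bigr => s _ /=.
exact: prod_setU_disjoint.
Qed.

Lemma join_signC S T : [disjoint S & T] ->
  join_sign S T = join_sign T S * (-1) ^+ (#|S| * #|T|).
Proof.
move=> ST; suff <- : join_sign S T * join_sign T S = (-1) ^+ (#|S| * #|T|).
  by rewrite mulrCA join_sign_sq mulr1.
rewrite !join_signE [X in _ * X]exchange_big -big_split /=.
rewrite mulnC exprM -prodr_const; apply: eq_bigr => s sS.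
rewrite -big_split -prodr_const; apply: eq_bigr => t tT; apply: inv_signC.
by apply: contraTneq tT => <-; rewrite (disjointFr ST sS).
Qed.

End Signs.

Section JoinSigns.
Variable m : nat.
Implicit Types (S T : {set 'I_m}) (v w : 'I_m).

Lemma join_face_signl S T v : [disjoint S & T] -> v \in S ->
  face_sign (S :|: T) v * join_sign S T = join_sign (S :\ v) T * face_sign S v.
Proof.
move=> ST vS; rewrite face_signU // (join_signD1l _ vS) mulrA.
by rewrite -(mulrA (face_sign S v)) face_sign_sq mulr1 mulrC.
Qed.

Lemma join_face_signr S T v : [disjoint S & T] -> v \in T ->
  face_sign (S :|: T) v * join_sign S T =
  join_sign S (T :\ v) * (face_sign T v * (-1) ^+ #|S|).
Proof.
move=> ST vT; have vS : v \notin S by rewrite (disjointFl ST vT).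
rewrite face_signU // (join_signD1r _ vT) -(prod_inv_signC vS) big_split /=.
rewrite /face_sign; ring.
Qed.

Lemma join_face_sign_meet S T w : w \in S -> w \in T ->
  join_sign (S :\ w) T * face_sign S w +
  join_sign S (T :\ w) * (face_sign T w * (-1) ^+ #|S|) = 0.
Proof.
move=> wS wT.
have -> : (-1) ^+ #|S| = - (-1) ^+ #|S :\ w| :> int.
  by rewrite (cardsD1 w S) wS exprS mulN1r.
rewrite (join_signD1r _ wT) (join_signD1l _ wS) /face_sign (big_setD1 _ wS).
rewrite (big_setD1 _ wT) /= inv_signxx !mul1r -(prod_inv_signC (negbT (setD11 w S))).
have := face_sign_sq (T :\ w) w; rewrite big_split /face_sign /=.
set A := \prod_(s in S :\ w) inv_sign w s; set B := \prod_(s in S :\ w) inv_sign s w.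
set C := \prod_(t in T :\ w) inv_sign w t; set J := join_sign _ _ => C2.
transitivity (B * J * A * (1 - C * C)); first ring.
by rewrite C2 subrr mulr0.
Qed.

End JoinSigns.

Lemma join_zlinear {m} : zlinear (@join m).
Proof. exact: ext_zlinear. Qed.

Lemma bnd_zlinear {m} : zlinear (@bnd m).
Proof. exact: ext_zlinear. Qed.

Section Join.
Variable m : nat.
Implicit Types (S T U : {set 'I_m}) (x y : Nsimp m) (z : Nsimp2 m).

Lemma join_basis_pair S T : join (basis (S, T)) = join_basis S T.
Proof. exact: ext_basis. Qed.

Lemma join_basis_disjoint S T : [disjoint S & T] ->
  join_basis S T = basis (S :|: T) *~ join_sign S T.
Proof. by rewrite /join_basis => ->. Qed.

Lemma join_basis_nondisjoint S T : ~~ [disjoint S & T] -> join_basis S T = 0.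
Proof. by rewrite /join_basis => /negbTE ->. Qed.

Lemma join_basis_meet S T w : w \in S -> w \in T -> join_basis S T = 0.
Proof.
move=> wS wT; apply: join_basis_nondisjoint; rewrite -setI_eq0.
by apply/set0Pn; exists w; rewrite inE wS.
Qed.

Lemma join_tens_suml (J : finType) (P : pred J) (G : J -> Nsimp m) c y :
  join (tens (\sum_(j | P j) G j *~ c j) y) = \sum_(j | P j) join (tens (G j) y) *~ c j.
Proof. by rewrite (zlinear_sum (tens_zlinearl y)) (zlinear_sum join_zlinear). Qed.

Lemma join_tens_sumr (J : finType) (P : pred J) (G : J -> Nsimp m) c x :
  join (tens x (\sum_(j | P j) G j *~ c j)) = \sum_(j | P j) join (tens x (G j)) *~ c j.
Proof. by rewrite (zlinear_sum (tens_zlinearr x)) (zlinear_sum join_zlinear). Qed.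

Lemma jmul_basis S T : jmul (basis S) (basis T) = join_basis S T.
Proof. by rewrite /jmul tens_basis join_basis_pair. Qed.

End Join.

Section ChainMap.
Variable m : nat.
Implicit Types (S T : {set 'I_m}) (z : Nsimp2 m).

Lemma join_bnd_tensl S T : join (tens (bnd (basis S)) (basis T)) =
  \sum_(v in S) join_basis (S :\ v) T *~ face_sign S v.
Proof.
rewrite bnd_basisE join_tens_suml.
by apply: eq_bigr => v _; rewrite tens_basis join_basis_pair.
Qed.

Lemma join_bnd_tensr S T : join (tens (basis S) (bnd (basis T))) =
  \sum_(v in T) join_basis S (T :\ v) *~ face_sign T v.
Proof.
rewrite bnd_basisE join_tens_sumr.
by apply: eq_bigr => v _; rewrite tens_basis join_basis_pair.
Qed.

Lemma bnd_join_basis_disjoint S T : [disjoint S & T] ->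
  bnd (join_basis S T) =
  \sum_(v in S) join_basis (S :\ v) T *~ face_sign S v +
  \sum_(v in T) join_basis S (T :\ v) *~ face_sign T v *~ (-1) ^+ #|S|.
Proof.
move=> ST; rewrite join_basis_disjoint // (zlinearZ bnd_zlinear) bnd_basisE.
rewrite mulrz_suml [in LHS](sum_setU_disjoint _ ST).
apply: f_equal2; apply: eq_bigr => v vX.
- have vT : v \notin T by rewrite (disjointFr ST vX).
  rewrite join_basis_disjoint; last by apply: disjointWl ST; apply: subD1set.
  by rewrite (setUD1l _ vT) -!mulrzA join_face_signl.
- have vS : v \notin S by rewrite (disjointFl ST vX).
  rewrite join_basis_disjoint; last by apply: disjointWr ST; apply: subD1set.
  by rewrite (setUD1r _ vS) -!mulrzA join_face_signr.
Qed.

Lemma bnd_join_basis_meet S T : ~~ [disjoint S & T] ->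
  \sum_(v in S) join_basis (S :\ v) T *~ face_sign S v +
  \sum_(v in T) join_basis S (T :\ v) *~ face_sign T v *~ (-1) ^+ #|S| = 0.
Proof.
rewrite -setI_eq0 => /set0Pn[w]; rewrite inE => /andP[wS wT].
rewrite (big_setD1 _ wS) (big_setD1 _ wT) /=.
rewrite [\sum_(v in S :\ w) _]big1 => [|v]; last first.
  rewrite !inE => /andP[vw _]; rewrite (join_basis_meet _ wT) ?mul0rz //.
  by rewrite !inE wS eq_sym vw.
rewrite [\sum_(v in T :\ w) _]big1 => [|v]; last first.
  rewrite !inE => /andP[vw _]; rewrite (join_basis_meet wS) ?mul0rz //.
  by rewrite !inE wT eq_sym vw.
rewrite !addr0; have [d | nd] := boolP [disjoint S :\ w & T].
  have d' := d; rewrite disjoint_setD1 in d'.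
  rewrite (join_basis_disjoint d) (join_basis_disjoint d') (setD1U_meet wS wT).
  by rewrite -!mulrzA -mulrzDr join_face_sign_meet // mulr0z.
have nd' := nd; rewrite disjoint_setD1 in nd'.
by rewrite /join_basis (negbTE nd) (negbTE nd') !mul0rz addr0.
Qed.

Lemma bnd_join_basis S T : bnd (join_basis S T) =
  join (tens (bnd (basis S)) (basis T)) +
  join (tens (basis S) (bnd (basis T))) *~ (-1) ^+ #|S|.
Proof.
rewrite join_bnd_tensl join_bnd_tensr mulrz_suml.
have [ST | ST] := boolP [disjoint S & T]; first exact: bnd_join_basis_disjoint.
by rewrite bnd_join_basis_meet // /join_basis (negbTE ST) (zlinear0 bnd_zlinear).
Qed.

Lemma bnd_join z : bnd (join z) = join (bnd2 z).
Proof.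
apply: (@zlinear_basis_eq _ _ (fun z => bnd (join z)) (fun z => join (bnd2 z)))
  => [||[S T]].
- exact: zlinear_comp bnd_zlinear join_zlinear.
- exact: zlinear_comp join_zlinear (ext_zlinear _).
by rewrite join_basis_pair /bnd2 ext_basis /= addrC join_zlinear bnd_join_basis addrC.
Qed.

End ChainMap.

Section Naturality.
Variables (m k : nat) (f : 'I_m -> 'I_k).
Hypothesis f_homo : {homo f : i j / (i <= j)%N}.
Implicit Types (S T : {set 'I_m}) (s t : 'I_m) (z : Nsimp2 m).

Lemma Nmap_zlinear : zlinear (Nmap f).
Proof. exact: ext_zlinear. Qed.

Lemma Nmap_basis S :
  Nmap f (basis S) = if #|f @: S| == #|S| then basis (f @: S) else 0.
Proof. exact: ext_basis. Qed.

Lemma card_imsetU_disjoint S T : [disjoint S & T] ->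
  (#|f @: (S :|: T)| == #|S :|: T|) =
  [&& #|f @: S| == #|S|, #|f @: T| == #|T| & [disjoint f @: S & f @: T]].
Proof.
rewrite -!setI_eq0 -!cards_eq0 imsetU => /eqP ST.
have := cardsUI S T; have := cardsUI (f @: S) (f @: T).
have := leq_imset_card f S; have := leq_imset_card f T.
(* Generalizing the cardinals identifies their syntactically different forms. *)
rewrite ST; move: #|_ :|: _| #|_ :|: _| #|_ :&: _| #|f @: S| #|f @: T| #|S| #|T| => *.
by apply/eqP/and3P => [? | [/eqP ? /eqP ? /eqP ?]]; [split; apply/eqP | ]; lia.
Qed.

Lemma inv_sign_homo s t : f s != f t -> inv_sign (f s) (f t) = inv_sign s t.
Proof.
move=> fst; rewrite /inv_sign; congr (_ ^+ _).
case: (ltngtP t s) => [ts | st | /val_inj ts]; last by rewrite ts eqxx in fst.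
- have := f_homo (ltnW ts); rewrite leq_eqVlt => /orP[/eqP/val_inj fts | ->] //.
  by rewrite fts eqxx in fst.
- by rewrite ltnNge f_homo ?(ltnW st).
Qed.

Lemma join_sign_imset S T : {in S :|: T &, injective f} ->
  join_sign (f @: S) (f @: T) = join_sign S T.
Proof.
move=> injf; rewrite !join_signE big_imset => [|x y xS yS]; last first.
  by apply: injf; rewrite inE ?xS ?yS.
apply: eq_bigr => s sS; rewrite big_imset => [|x y xT yT]; last first.
  by apply: injf; rewrite inE ?xT ?yT ?orbT.
apply: eq_bigr => t tT; have [<-|st] := eqVneq s t; first by rewrite !inv_signxx.
apply: inv_sign_homo; apply: contra st => /eqP fst; apply/eqP/injf => //.
  by rewrite inE sS.
by rewrite inE tT orbT.
Qed.

Lemma Nmap_join_basis S T :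
  Nmap f (join_basis S T) = join (tens (Nmap f (basis S)) (Nmap f (basis T))).
Proof.
rewrite !Nmap_basis; have [ST | ] := boolP [disjoint S & T]; last first.
  rewrite {1}/join_basis => /negbTE ST; rewrite ST (zlinear0 Nmap_zlinear).
  have /set0Pn[w] : S :&: T != set0 by rewrite setI_eq0 ST.
  rewrite inE => /andP[wS wT].
  case: eqP => _; last by rewrite tens0x (zlinear0 join_zlinear).
  case: eqP => _; last by rewrite tensx0 (zlinear0 join_zlinear).
  by rewrite tens_basis join_basis_pair (join_basis_meet (imset_f f wS) (imset_f f wT)).
rewrite join_basis_disjoint // (zlinearZ Nmap_zlinear) Nmap_basis.
have injf := @imset_injP _ _ f (S :|: T); rewrite card_imsetU_disjoint // in injf *.
case: eqP => [fS|_]; last by rewrite mul0rz tens0x (zlinear0 join_zlinear).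
case: eqP => [fT|_]; last by rewrite mul0rz tensx0 (zlinear0 join_zlinear).
rewrite tens_basis join_basis_pair /join_basis imsetU /=.
case: ifP => fST; last by rewrite mul0rz.
by rewrite join_sign_imset //; apply/injf; rewrite fS fT fST !eqxx.
Qed.

Lemma Nmap_join z : Nmap f (join z) = join (Nmap2 f z).
Proof.
apply: (@zlinear_basis_eq _ _ (fun z => Nmap f (join z)) (fun z => join (Nmap2 f z)))
  => [||[S T]].
- exact: zlinear_comp Nmap_zlinear join_zlinear.
- exact: zlinear_comp join_zlinear (ext_zlinear _).
by rewrite join_basis_pair /Nmap2 ext_basis Nmap_join_basis.
Qed.

End Naturality.

Section JoinAlgebra.
Variable m : nat.
Implicit Types (S T U : {set 'I_m}) (x y z : Nsimp m).

Lemma jmul_zlinearl y : zlinear (fun x => jmul x y).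
Proof. exact: zlinear_comp join_zlinear (tens_zlinearl y). Qed.

Lemma jmul_zlinearr x : zlinear (jmul x).
Proof. exact: zlinear_comp join_zlinear (tens_zlinearr x). Qed.

Lemma jmul0x y : jmul 0 y = 0.
Proof. exact: zlinear0 (jmul_zlinearl y). Qed.

Lemma jmulx0 x : jmul x 0 = 0.
Proof. exact: zlinear0 (jmul_zlinearr x). Qed.

Lemma jmulZx a x y : jmul (x *~ a) y = jmul x y *~ a.
Proof. exact: (zlinearZ (jmul_zlinearl y) a x). Qed.

Lemma jmulxZ a x y : jmul x (y *~ a) = jmul x y *~ a.
Proof. exact: (zlinearZ (jmul_zlinearr x) a y). Qed.

Lemma jmulE x y : jmul x y = \sum_S \sum_T join_basis S T *~ (x S * y T).
Proof.
rewrite /jmul /join /ext (pair_bigA _ (fun S T => join_basis S T *~ (x S * y T))).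
by apply: eq_bigr => p _; rewrite ffunE.
Qed.

Lemma join_basis_assoc S T U :
  jmul (join_basis S T) (basis U) = jmul (basis S) (join_basis T U).
Proof.
have [ST | nST] := boolP [disjoint S & T]; last first.
  rewrite join_basis_nondisjoint // jmul0x; have [TU | nTU] := boolP [disjoint T & U].
    rewrite (join_basis_disjoint TU) jmulxZ jmul_basis join_basis_nondisjoint ?mul0rz //.
    by rewrite disjoint_setUr negb_and nST.
  by rewrite join_basis_nondisjoint ?jmulx0.
rewrite (join_basis_disjoint ST) jmulZx jmul_basis.
have [TU | nTU] := boolP [disjoint T & U]; last first.
  rewrite (join_basis_nondisjoint nTU) jmulx0 join_basis_nondisjoint ?mul0rz //.
  by rewrite disjoint_setUl negb_and nTU orbT.
rewrite (join_basis_disjoint TU) jmulxZ jmul_basis.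
have [SU | nSU] := boolP [disjoint S & U]; last first.
  rewrite !join_basis_nondisjoint ?mul0rz //.
    by rewrite disjoint_setUr negb_and nSU orbT.
  by rewrite disjoint_setUl negb_and nSU.
have SUT : [disjoint S :|: T & U] by rewrite disjoint_setUl SU TU.
have STU : [disjoint S & T :|: U] by rewrite disjoint_setUr ST SU.
rewrite (join_basis_disjoint SUT) (join_basis_disjoint STU) setUA -!mulrzA.
by rewrite (join_signUl _ ST) (join_signUr _ TU); congr (_ *~ _); ring.
Qed.

Lemma join_basisC S T :
  join_basis S T = join_basis T S *~ (-1) ^+ (#|S| * #|T|).
Proof.
have [ST | nST] := boolP [disjoint S & T]; last first.
  have nTS : ~~ [disjoint T & S] by rewrite disjoint_sym.
  by rewrite (join_basis_nondisjoint nST) (join_basis_nondisjoint nTS) mul0rz.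
have TS : [disjoint T & S] by rewrite disjoint_sym.
by rewrite (join_basis_disjoint ST) (join_basis_disjoint TS) setUC -mulrzA -join_signC.
Qed.

Lemma join_basis0x S : join_basis set0 S = basis S.
Proof.
have d : [disjoint set0 & S] by rewrite -setI_eq0 set0I.
by rewrite (join_basis_disjoint d) set0U join_signE big_set0.
Qed.

Lemma join_basisx0 S : join_basis S set0 = basis S.
Proof.
rewrite join_basisC join_basis0x cards0 muln0 expr0.
exact: mulr1z.
Qed.

Lemma jmulA x y z : jmul (jmul x y) z = jmul x (jmul y z).
Proof.
move: x; apply: (@zlinear_basis_eq _ _ (fun x => jmul (jmul x y) z)
                                       (fun x => jmul x (jmul y z))) => [||S].
- exact: zlinear_comp (jmul_zlinearl z) (jmul_zlinearl y).
- exact: jmul_zlinearl.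
move: y; apply: (@zlinear_basis_eq _ _ (fun y => jmul (jmul (basis S) y) z)
                                       (fun y => jmul (basis S) (jmul y z))) => [||T].
- exact: zlinear_comp (jmul_zlinearl z) (jmul_zlinearr (basis S)).
- exact: zlinear_comp (jmul_zlinearr (basis S)) (jmul_zlinearl z).
rewrite jmul_basis; move: z; apply: (@zlinear_basis_eq _ _ (jmul (join_basis S T))
                                       (fun z => jmul (basis S) (jmul (basis T) z))) => [||U].
- exact: jmul_zlinearr.
- exact: zlinear_comp (jmul_zlinearr (basis S)) (jmul_zlinearr (basis T)).
by rewrite jmul_basis join_basis_assoc.
Qed.

Lemma jmul1x x : jmul (junit m) x = x.
Proof.
apply: (@zlinear_basis_eq _ _ (jmul (junit m)) id (jmul_zlinearr _)) => // S.
by rewrite jmul_basis join_basis0x.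
Qed.

Lemma jmulx1 x : jmul x (junit m) = x.
Proof.
apply: (@zlinear_basis_eq _ _ (fun x => jmul x (junit m)) id (jmul_zlinearl _)) => // S.
by rewrite jmul_basis join_basisx0.
Qed.

End JoinAlgebra.

Section Grading.
Variable m : nat.
Implicit Types (S T : {set 'I_m}) (x y : Nsimp m).

Lemma Nhom0 k : Nhom k (0 : Nsimp m).
Proof. by move=> S; rewrite ffunE eqxx. Qed.

Lemma NhomD k a x y : Nhom k x -> Nhom k y -> Nhom k (x *~ a + y).
Proof.
move=> hx hy S; rewrite ffunE ffunMzE.
by have [->|/hx //] := eqVneq (x S) 0; rewrite mul0rz add0r => /hy.
Qed.

Lemma NhomZ k a x : Nhom k x -> Nhom k (x *~ a).
Proof. by move=> hx; rewrite -[_ *~ _]addr0; apply: NhomD hx (Nhom0 k). Qed.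

Lemma Nhom_sum k (I : finType) (P : pred I) (F : I -> Nsimp m) :
  (forall i, P i -> Nhom k (F i)) -> Nhom k (\sum_(i | P i) F i).
Proof.
move=> hF; apply: big_ind => //; first exact: Nhom0.
by move=> x y hx hy; rewrite -[x]mulr1z; apply: NhomD.
Qed.

Lemma Nhom_basisZ S c : Nhom #|S| (basis S *~ c).
Proof.
move=> U; rewrite ffunMzE basisE; have [-> // | _] := eqVneq U S.
by rewrite mul0rz eqxx.
Qed.

Lemma Nhom_basis S : Nhom #|S| (basis S).
Proof. by rewrite -[basis S]mulr1z; apply: Nhom_basisZ. Qed.

Lemma Nhom_join_basis S T : Nhom (#|S| + #|T|) (join_basis S T).
Proof.
have [ST | nST] := boolP [disjoint S & T]; last first.
  by rewrite (join_basis_nondisjoint nST); apply: Nhom0.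
rewrite (join_basis_disjoint ST) -cardsUI.
by move: ST; rewrite -setI_eq0 => /eqP ->; rewrite cards0 addn0; apply: Nhom_basisZ.
Qed.

Lemma Nhom_jmul p q x y : Nhom p x -> Nhom q y -> Nhom (p + q) (jmul x y).
Proof.
move=> hx hy; rewrite jmulE; apply: Nhom_sum => S _; apply: Nhom_sum => T _.
have [-> | /hx pS] := eqVneq (x S) 0; first by rewrite mul0r mulr0z; apply: Nhom0.
have [-> | /hy qT] := eqVneq (y T) 0; first by rewrite mulr0 mulr0z; apply: Nhom0.
by rewrite -pS -qT; apply/NhomZ/Nhom_join_basis.
Qed.

Lemma jmulC p q x y : Nhom p x -> Nhom q y -> jmul x y = jmul y x *~ (-1) ^+ (p * q).
Proof.
move=> hx hy; rewrite !jmulE mulrz_suml exchange_big; apply: eq_bigr => T _.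
rewrite mulrz_suml; apply: eq_bigr => S _.
rewrite (join_basisC S T) [y T * _]mulrC mulrzAC.
have [-> | ] := eqVneq (x S * y T) 0; first by rewrite mulr0z !mul0rz.
by rewrite mulf_eq0 negb_or => /andP[/hx <- /hy <-].
Qed.

End Grading.

Section PoincareDuality.
Variable m : nat.
Implicit Types (S T : {set 'I_m}) (x y : Nsimp m).

Lemma cards_le_ord S : (#|S| <= m)%N.
Proof. by have := max_card (mem S); rewrite card_ord. Qed.

Definition hcomp (k : nat) x : Nsimp m :=
  [ffun S : {set 'I_m} => if #|S| == k then x S else 0].

Lemma Nhom_hcomp k x : Nhom k (hcomp k x).
Proof. by move=> S; rewrite ffunE; case: (#|S| =P k) => // _; rewrite eqxx. Qed.

Lemma hcomp_sum x : x = \sum_(k < m.+1) hcomp k x.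
Proof.
apply/ffunP => S; rewrite sum_ffunE; under eq_bigr do rewrite ffunE.
rewrite -big_mkcond (eq_bigl (fun k : 'I_m.+1 => k == #|S| :> nat)) => [|k]; last first.
  by rewrite eq_sym.
by rewrite (big_ord1_eq _ (fun _ => x S)) ltnS cards_le_ord.
Qed.

Lemma Nhom_decomp x :
  exists N (c : nat -> Nsimp m), (forall k, Nhom k (c k)) /\ x = \sum_(k < N) c k.
Proof.
by exists m.+1, (hcomp^~ x); split; [move=> k; apply: Nhom_hcomp | apply: hcomp_sum].
Qed.

Lemma Nhom_sum_eq0 N (c : nat -> Nsimp m) : (forall k, Nhom k (c k)) ->
  \sum_(k < N) c k = 0 -> forall k, (k < N)%N -> c k = 0.
Proof.
move=> hc /ffunP sum0 k kN; apply/ffunP => S; rewrite ffunE; apply/eqP.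
apply: contraT => ckS.
move: (sum0 S); rewrite sum_ffunE ffunE (bigD1 (Ordinal kN)) //= big1 ?addr0.
  by move/eqP; rewrite (negbTE ckS).
move=> i ik; apply/eqP; apply: contraNT ik => /hc ciS.
by apply/eqP/val_inj; rewrite /= -ciS (hc k S ckS).
Qed.

Lemma Nhom_unique_simplex k S0 x :
  (forall S, #|S| = k -> S = S0) -> Nhom k x -> x = basis S0 *~ x S0.
Proof.
move=> uniqS hx; apply/ffunP => S; rewrite ffunMzE basisE.
have [-> | nS] := eqVneq S S0; first by rewrite mulrzz mul1r.
rewrite mul0rz; apply/eqP; apply: contraR nS => /hx/uniqS ->.
exact: eqxx.
Qed.

Lemma Nhom0_junit x : Nhom 0 x -> x = junit m *~ x set0.
Proof. by apply: Nhom_unique_simplex => S /eqP; rewrite cards_eq0 => /eqP. Qed.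

Lemma Nhom_top x : Nhom m x -> x = basis setT *~ x setT.
Proof.
apply: Nhom_unique_simplex => S cS; apply/eqP.
by rewrite eqEcard subsetT cardsT card_ord cS leqnn.
Qed.

Lemma Nhom_gt_eq0 i x : (m < i)%N -> Nhom i x -> x = 0.
Proof.
move=> mi hx; apply/ffunP => S; rewrite ffunE; apply/eqP.
by apply: contraLR mi => /hx <-; rewrite -leqNgt cards_le_ord.
Qed.

Lemma Nhom_fingen k : exists s : seq (Nsimp m),
  (forall i : 'I_(size s), Nhom k s`_i) /\
  forall x, Nhom k x -> exists c : 'I_(size s) -> int, x = \sum_(i < size s) s`_i *~ c i.
Proof.
pose r := enum [set S : {set 'I_m} | #|S| == k].
have r_k i : (i < size r)%N -> #|nth set0 r i| = k.
  by move=> ir; have := mem_nth set0 ir; rewrite mem_enum inE => /eqP.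
exists [seq basis U | U <- r]; rewrite size_map; split => [i | x hx].
  by rewrite (nth_map set0 _ _ (ltn_ord i)) -(r_k i (ltn_ord i)); apply: Nhom_basis.
exists (fun i => x (nth set0 r i)).
transitivity (\sum_(U <- r) basis U *~ x U).
  rewrite {1}(free_decomp x) (bigID (fun S => #|S| == k)) /=.
  rewrite [X in _ + X]big1 => [|S nS]; last first.
    by have [-> | /hx kS] := eqVneq (x S) 0; [rewrite mulr0z | rewrite kS eqxx in nS].
  by rewrite addr0 big_enum; apply: eq_bigl => S; rewrite inE.
rewrite (big_nth set0) big_mkord; apply: eq_bigr => i _.
by rewrite (nth_map set0 _ _ (ltn_ord i)).
Qed.

Lemma jmul_basisr x T : jmul x (basis T) = \sum_S join_basis S T *~ x S.
Proof.
move: x; apply: (@zlinear_basis_eq _ _ (fun x => jmul x (basis T))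
                                    (ext (fun S => join_basis S T))).
- exact: jmul_zlinearl.
- exact: ext_zlinear.
by move=> S; rewrite jmul_basis ext_basis.
Qed.

Lemma join_basis_setT S T : join_basis S T setT = (T == ~: S)%:R * join_sign S T.
Proof.
have [-> | nT] := eqVneq T (~: S).
  have d : [disjoint S & ~: S] by rewrite -setI_eq0 setICr.
  by rewrite (join_basis_disjoint d) setUCr basisZ_id mul1r.
rewrite mul0r /join_basis; case: ifP => [ST | _]; last by rewrite ffunE.
rewrite ffunMzE basisE; case: eqP => [USTT | _]; last by rewrite mul0rz.
case/eqP: nT; apply/setP => v; rewrite inE.
have [vS | vS] := boolP (v \in S); first by rewrite (disjointFr ST vS).
by have := in_setT v; rewrite USTT inE (negbTE vS).
Qed.

Lemma jmul_basis_setC x S : jmul x (basis (~: S)) setT = x S * join_sign S (~: S).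
Proof.
rewrite jmul_basisr sum_ffunE (bigD1 S) //= big1 => [|S' nS]; last first.
  by rewrite ffunMzE join_basis_setT (inj_eq (@setC_inj _)) eq_sym (negbTE nS) mul0r mul0rz.
by rewrite addr0 ffunMzE join_basis_setT eqxx mul1r mulrzz mulrC.
Qed.

Lemma jmul_nondegr i x : Nhom i x -> x != 0 ->
  exists y, Nhom (m - i) y /\ jmul x y != 0.
Proof.
move=> hx /free_neq0[S xS]; exists (basis (~: S)); split.
  have cS := cardsC S; rewrite card_ord in cS.
  have -> : (m - i = #|~: S|)%N by rewrite -(hx S xS) -{1}cS addKn.
  exact: Nhom_basis.
apply/eqP => /ffunP/(_ setT); rewrite jmul_basis_setC ffunE => /eqP.
by rewrite mulf_eq0 (negbTE xS) (negbTE (join_sign_neq0 _ _)).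
Qed.

Lemma jmul_nondegl i y : (i <= m)%N -> Nhom (m - i) y -> y != 0 ->
  exists x, Nhom i x /\ jmul x y != 0.
Proof.
move=> im hy /(jmul_nondegr hy)[x [hx yx]]; rewrite subKn // in hx.
by exists x; split; rewrite // (jmulC hx hy) mulrz_sign_eq0.
Qed.

Lemma join_PD_algebra : is_PD_algebra (@Nhom m) (@jmul m) (junit m) m.
Proof.
split.
  split; first by move=> k; split; [exact: Nhom0 | exact: NhomD].
  by split; [exact: Nhom_decomp | exact: Nhom_sum_eq0].
split; first exact: jmulA.
split; first by move=> x; rewrite jmul1x jmulx1.
split; first by move=> a x y z; rewrite (jmul_zlinearl z) (jmul_zlinearr z).
split; first exact: Nhom_jmul.
split; first exact: jmulC.
split.
  split; first by have := Nhom_basis (S := set0 : {set 'I_m}); rewrite cards0.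
  split; first by move=> x /Nhom0_junit ->; exists (x set0).
  by move=> c /ffunP/(_ set0); rewrite basisZ_id ffunE.
split; first exact: Nhom_fingen.
split; first exact: Nhom_gt_eq0.
split.
  exists (basis setT); split => [|x hx].
    by have := Nhom_basis (S := [set: 'I_m]); rewrite cardsT card_ord.
  by exists (x setT); split => [|c ->]; [exact: Nhom_top | rewrite basisZ_id].
by move=> i im; split=> [x | y]; [exact: jmul_nondegr | exact: jmul_nondegl].
Qed.

End PoincareDuality.

Theorem theorem4p4 (m : nat) :
  (* the join product N (x) N -> N is a chain map (of degree 0) *)
  ((forall S T : {set 'I_m}, Nhom (#|S| + #|T|)%N (join (basis (S, T))))
   /\ (forall z : Nsimp2 m, bnd (join z) = join (bnd2 z)))
  (* natural in [n]: for every order-preserving f : [n] -> [n'] *)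
  /\ (forall (k : nat) (f : 'I_m -> 'I_k),
        {homo f : i j / (i <= j)%N} ->
        forall z : Nsimp2 m, Nmap f (join z) = join (Nmap2 f z))
  (* Poincare duality algebra of formal dimension n+1 = m, unit = empty simplex *)
  /\ is_PD_algebra (@Nhom m) (@jmul m) (junit m) m.
Proof.
split; first split.
- by move=> S T; rewrite join_basis_pair; apply: Nhom_join_basis.
- exact: bnd_join.
split; first by move=> k f f_homo; apply: Nmap_join.
exact: join_PD_algebra.
Qed.
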